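(* Let $\mathbb{X}$ be an ACM set of $s$ distinct reduced points in $\mathbb{P}^1\times\mathbb{P}^1$ over a field $K$ of characteristic zero, with coordinates chosen so that $x_0,y_0$ is a regular sequence in $R_{\mathbb{X}}$, let $r=\#\pi_1(\mathbb{X})$, $t=\#\pi_2(\mathbb{X})$, and let $\vartheta_{\mathbb{X}}$ be its Kähler different. (a) If $r\ge2$, then $\operatorname{HF}_{\vartheta_{\mathbb{X}}}(0,j)=0$ for $j<t-1$. (b) If $t\ge2$, then $\operatorname{HF}_{\vartheta_{\mathbb{X}}}(i,0)=0$ for $i<r-1$. (c) $\vartheta_{\mathbb{X}}$ contains a non-zerodivisor of $R_{\mathbb{X}}$. (d) Let $j\in\mathbb{N}$, let $\{h_1,\dots,h_u\}$ be a bihomogeneous minimal system of generators of $\vartheta_{\mathbb{X}}$ with $\deg(h_k)=(i_k,j_k)$, and let $i_0=\max\{i_k\mid j_k\le j\}$. For $i\ge i_0$, if $\operatorname{HF}_{\vartheta_{\mathbb{X}}}(i,j)=\operatorname{HF}_{\vartheta_{\mathbb{X}}}(i+1,j)$ then $\operatorname{HF}_{\vartheta_{\mathbb{X}}}(i+1,j)=\operatorname{HF}_{\vartheta_{\mathbb{X}}}(i+2,j)$. (e) $\operatorname{HF}_{\vartheta_{\mathbb{X}}}(i,j)=s$ for all $(i,j)\succeq(2r-2,2t-2)$.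
   Context: $S=K[X_0,X_1,Y_0,Y_1]$ with $\deg X_i=(1,0)$, $\deg Y_i=(0,1)$; $\succeq$ is the componentwise order. $\pi_1(\mathbb{X})$, $\pi_2(\mathbb{X})$ are the sets of distinct first resp. second coordinates of the points. $R_{\mathbb{X}}=S/I_{\mathbb{X}}$, $x_i,y_i$ the images of $X_i,Y_i$; $\mathbb{X}$ is ACM if $R_{\mathbb{X}}$ is Cohen–Macaulay (then after linear coordinate changes $x_0,y_0$ may be assumed a regular sequence). The Kähler different $\vartheta_{\mathbb{X}}$ is the ideal of $R_{\mathbb{X}}$ generated by the residue classes of $\frac{\partial F_a}{\partial X_1}\frac{\partial F_b}{\partial Y_1}-\frac{\partial F_b}{\partial X_1}\frac{\partial F_a}{\partial Y_1}$ for a bihomogeneous generating set $F_1,\dots,F_u$ of $I_{\mathbb{X}}$ (the initial Fitting ideal of $\Omega^1_{R_{\mathbb{X}}/K[x_0,y_0]}$); $\operatorname{HF}_{\vartheta_{\mathbb{X}}}(i,j)=\dim_K(\vartheta_{\mathbb{X}})_{i,j}$. *)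

From mathcomp Require Import all_boot all_order all_algebra.
From mathcomp Require Import mpoly.
From Stdlib Require Import ClassicalEpsilon.

Set Implicit Arguments.
Unset Strict Implicit.
Unset Printing Implicit Defensive.

Import GRing.Theory.
Local Open Scope ring_scope.

(* S = K[X_0, X_1, Y_0, Y_1]; variable indices: X_0 = 0, X_1 = 1, Y_0 = 2, Y_1 = 3. *)
Notation S K := {mpoly K[4]}.

Definition iX0 : 'I_4 := @Ordinal 4 0 isT.
Definition iX1 : 'I_4 := @Ordinal 4 1 isT.
Definition iY0 : 'I_4 := @Ordinal 4 2 isT.
Definition iY1 : 'I_4 := @Ordinal 4 3 isT.

Definition bideg (m : 'X_{1..4}) : nat * nat :=
  ((m iX0 + m iX1)%N, (m iY0 + m iY1)%N).

Section Defs.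
Variable K : fieldType.

Definition bihomog (i j : nat) (f : S K) : bool :=
  all (fun m => bideg m == (i, j)) (msupp f).

Definition bicomp (i j : nat) (f : S K) : S K :=
  \sum_(m <- msupp f | bideg m == (i, j)) f@_m *: 'X_[m].

(* a point of P^1 x P^1 given by affine representatives (a0,a1,b0,b1),
   encoded as the evaluation vector for (X_0, X_1, Y_0, Y_1) *)
Definition pt := 'I_4 -> K.

Definition valid_pt (p : pt) : Prop :=
  ((p iX0 != 0) || (p iX1 != 0)) /\ ((p iY0 != 0) || (p iY1 != 0)).

(* same first (resp. second) projective coordinate *)
Definition same1 (p q : pt) : bool := p iX0 * q iX1 == p iX1 * q iX0.
Definition same2 (p q : pt) : bool := p iY0 * q iY1 == p iY1 * q iY0.

Definition distinct_pts (s : nat) (P : 'I_s -> pt) : Prop :=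
  (forall k, valid_pt (P k)) /\
  (forall k l, k != l -> ~~ (same1 (P k) (P l) && same2 (P k) (P l))).

(* #pi_1(X), #pi_2(X): number of distinct first/second coordinates *)
Definition card_pi1 (s : nat) (P : 'I_s -> pt) : nat :=
  #|[set k : 'I_s | [forall l : 'I_s, (l < k)%N ==> ~~ same1 (P l) (P k)]]|.
Definition card_pi2 (s : nat) (P : 'I_s -> pt) : nat :=
  #|[set k : 'I_s | [forall l : 'I_s, (l < k)%N ==> ~~ same2 (P l) (P k)]]|.

Definition IX (s : nat) (P : 'I_s -> pt) : S K -> Prop :=
  fun f => forall (k : 'I_s) (i j : nat), (bicomp i j f).@[P k] = 0.

Definition in_ideal (gs : seq (S K)) (f : S K) : Prop :=
  exists cs : 'I_(size gs) -> S K, f = \sum_(k < size gs) cs k * gs`_k.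

Definition bihom_gens_IX (s : nat) (P : 'I_s -> pt) (F : seq (S K)) : Prop :=
  (forall k : 'I_(size F), exists i j, bihomog i j F`_k) /\
  (forall k : 'I_(size F), IX P F`_k) /\
  (forall f, IX P f <-> in_ideal F f).

Definition kjac (Fa Fb : S K) : S K :=
  Fa^`M(iX1) * Fb^`M(iY1) - Fb^`M(iX1) * Fa^`M(iY1).

(* preimage in S of the Kaehler different: I_X + (kjac F_a F_b)_{a,b} *)
Definition kdiff (F : seq (S K)) : S K -> Prop :=
  fun f => in_ideal (F ++ [seq kjac Fa Fb | Fa <- F, Fb <- F]) f.

(* dim_K of (A_{i,j} + I)/I -- A, Q predicates on S; n = dim_K(A/Q) *)
Definition dim_mod (A Q : S K -> Prop) (n : nat) : Prop :=
  exists b : 'I_n -> S K,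
    (forall k, A (b k)) /\
    (forall c : 'I_n -> K, Q (\sum_k c k *: b k) -> forall k, c k = 0) /\
    (forall f, A f -> exists c : 'I_n -> K, Q (f - \sum_k c k *: b k)).

Definition dimK (A Q : S K -> Prop) : nat :=
  epsilon (inhabits 0%N) (fun n => dim_mod A Q n).

Definition HF_kdiff (s : nat) (P : 'I_s -> pt) (F : seq (S K)) (i j : nat) : nat :=
  dimK (fun f => kdiff F f /\ bihomog i j f) (IX P).

Definition x0y0_regular (s : nat) (P : 'I_s -> pt) : Prop :=
  (forall f, IX P ('X_iX0 * f) -> IX P f) /\
  (forall f, (exists g h, IX P g /\ 'X_iY0 * f = g + 'X_iX0 * h) ->
             exists g h, IX P g /\ f = g + 'X_iX0 * h) /\
  ~ (exists g h1 h2, IX P g /\ 1 = g + 'X_iX0 * h1 + 'X_iY0 * h2).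

End Defs.

(* Evaluation at the s points identifies every bihomogeneous component of R_X
   with a subspace of K^s, so HF_theta(i,j) is the rank of the matrix of values
   at the points of theta_{i,j}.

   Let L_X (resp. L_Y) be the product of the linear forms in X (resp. Y)
   through the r distinct first (t distinct second) coordinates.  Both lie in
   I_X, so the Jacobian minor dL_X/dX_1 * dL_Y/dY_1, of bidegree (r-1, t-1),
   lies in theta_X.  Regularity of x_0, y_0 forces a_0, b_0 <> 0 at every
   point, and then this minor vanishes at no point: it is a non-zerodivisor
   (c).  Multiplied by the separators of a point, of bidegrees (r-1, 0) and
   (0, t-1), and by powers of x_0, y_0, it gives elements of theta_X of every
   bidegree >= (2r-2, 2t-2) vanishing at all points but one (e).  A minor of
   bidegree (0, j) needs a generator of I_X of bidegree (0, b) with b <= j + 1,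
   but a nonzero binary form of degree b vanishing on the t second coordinates
   has b >= t (a); (b) is symmetric.  Beyond the degrees of the generators,
   theta_{i+1,j} = x_0 theta_{i,j} + x_1 theta_{i,j}; as x_0 acts invertibly,
   equal dimensions in degrees i and i+1 give x_1 theta_{i,j} <= x_0 theta_{i,j}
   and the dimension stays constant from then on (d). *)

From HB Require Import structures.
From mathcomp Require Import all_boot all_order all_algebra.
From mathcomp Require Import mpoly.
From mathcomp Require Import zify ring.
From Stdlib Require Import ClassicalEpsilon.

Set Implicit Arguments.
Unset Strict Implicit.
Unset Printing Implicit Defensive.

Import GRing.Theory.
Local Open Scope ring_scope.

(** * Bidegrees *)

Section Bidegree.
Variable K : fieldType.
Implicit Types (f g : S K) (m : 'X_{1..4}).

Lemma bidegD m1 m2 :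
  bideg (m1 + m2)%MM = ((bideg m1).1 + (bideg m2).1, (bideg m1).2 + (bideg m2).2)%N.
Proof. by rewrite /bideg /= !mnmDE; congr pair; lia. Qed.

Lemma bidegU (i : 'I_4) :
  bideg U_(i) = if (i < 2)%N then (1, 0)%N else (0, 1)%N.
Proof. by rewrite /bideg !mnm1E; case: i => -[|[|[|[|]]]]. Qed.

Lemma bihomogP i j f :
  reflect (forall m, f@_m != 0 -> bideg m = (i, j)) (bihomog i j f).
Proof.
apply: (iffP allP) => H m.
- by rewrite -mcoeff_msupp => /H /eqP.
- by rewrite mcoeff_msupp => /H ->.
Qed.

Lemma bihomog_coeff0P i j f :
  reflect (forall m, bideg m != (i, j) -> f@_m = 0) (bihomog i j f).
Proof.
apply: (iffP (bihomogP i j f)) => H m.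
- by apply: contraNeq => /H ->.
- by move=> nz; apply/eqP; apply: contraR nz => /H ->.
Qed.

Lemma bihomog0 i j : bihomog i j (0 : S K).
Proof. by apply/bihomog_coeff0P => m _; rewrite mcoeff0. Qed.

Lemma bihomogD i j f g : bihomog i j f -> bihomog i j g -> bihomog i j (f + g).
Proof.
move=> /bihomog_coeff0P Hf /bihomog_coeff0P Hg.
by apply/bihomog_coeff0P => m hm; rewrite mcoeffD Hf // Hg // addr0.
Qed.

Lemma bihomogZ i j c f : bihomog i j f -> bihomog i j (c *: f).
Proof.
by move=> /bihomog_coeff0P Hf; apply/bihomog_coeff0P => m hm; rewrite mcoeffZ Hf ?mulr0.
Qed.

Lemma bihomogB i j f g : bihomog i j f -> bihomog i j g -> bihomog i j (f - g).
Proof. by move=> hf hg; rewrite -scaleN1r; apply/bihomogD/bihomogZ. Qed.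

Lemma bihomog_sum i j (I : Type) (r : seq I) (p : pred I) (G : I -> S K) :
  (forall x, p x -> bihomog i j (G x)) -> bihomog i j (\sum_(x <- r | p x) G x).
Proof.
by move=> H; elim/big_rec: _ => [|x y /H]; [apply: bihomog0 | apply: bihomogD].
Qed.

Lemma bihomogX m : bihomog (bideg m).1 (bideg m).2 ('X_[m] : S K).
Proof.
by apply/bihomogP => m'; rewrite mcoeffX; case: (m =P m') => [<-|] //=; rewrite eqxx.
Qed.

Lemma bihomog_X0 : bihomog 1 0 ('X_iX0 : S K).
Proof. by have := bihomogX U_(iX0); rewrite bidegU. Qed.
Lemma bihomog_Y0 : bihomog 0 1 ('X_iY0 : S K).
Proof. by have := bihomogX U_(iY0); rewrite bidegU. Qed.

Lemma bihomog1 : bihomog 0 0 (1 : S K).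
Proof. by rewrite -mpolyX0; have := bihomogX 0%MM; rewrite /bideg !mnm0E. Qed.

Lemma bihomogM a b c d f g : bihomog a b f -> bihomog c d g ->
  bihomog (a + c) (b + d) (f * g).
Proof.
move=> /bihomogP Hf /bihomogP Hg; apply/bihomog_coeff0P => m hm.
rewrite mcoeffM big1 // => k /eqP hk.
have [f0|/Hf df] := eqVneq f@_k.1 0; first by rewrite f0 mul0r.
have [g0|/Hg dg] := eqVneq g@_k.2 0; first by rewrite g0 mulr0.
have : bideg (k.1 + k.2)%MM != (a + c, b + d)%N by rewrite -hk.
by rewrite bidegD df dg eqxx.
Qed.

Lemma bihomogXn a b f e : bihomog a b f -> bihomog (e * a) (e * b) (f ^+ e).
Proof.
move=> hf; elim: e => [|e IH]; first by rewrite expr0 !mul0n; apply: bihomog1.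
by rewrite exprS !mulSn; apply: bihomogM.
Qed.

Lemma bihomog_prod (I : finType) (A : {pred I}) (G : I -> S K) a b :
  (forall x, bihomog a b (G x)) ->
  bihomog (#|A| * a) (#|A| * b) (\prod_(x in A) G x).
Proof.
move=> H; rewrite -big_enum cardE; elim: (enum A) => [|x r IH] /=.
  by rewrite big_nil !mul0n; apply: bihomog1.
by rewrite big_cons !mulSn; apply: bihomogM.
Qed.

Lemma mcoeff_bicomp i j f m :
  (bicomp i j f)@_m = if bideg m == (i, j) then f@_m else 0.
Proof.
rewrite /bicomp raddf_sum /=.
under eq_bigr do rewrite mcoeffZ mcoeffX.
rewrite big_mkcond /=; case: (boolP (m \in msupp f)) => hm.
- rewrite (bigD1_seq m) //= ?msupp_uniq // eqxx mulr1 big1 ?addr0 //.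
  by move=> m' /negbTE; rewrite eq_sym => ->; rewrite mulr0; case: ifP.
- rewrite big1; first by case: ifP => // _; apply/esym/memN_msupp_eq0.
  move=> m' _; case: (m' =P m) => [e|]; last by rewrite /= mulr0; case: ifP.
  by move: hm; rewrite -e mcoeff_msupp negbK => /eqP ->; rewrite mul0r; case: ifP.
Qed.

Lemma bicomp_is_linear i j : linear (@bicomp K i j).
Proof.
move=> c f g; apply/mpolyP => m.
by rewrite mcoeffD mcoeffZ !mcoeff_bicomp mcoeffD mcoeffZ; case: ifP; rewrite ?mulr0 ?addr0.
Qed.

HB.instance Definition _ i j := GRing.isLinear.Build K (S K) (S K)
  _ (@bicomp K i j) (bicomp_is_linear i j).

Lemma bihomog_bicomp i j f : bihomog i j (bicomp i j f).
Proof. by apply/bihomog_coeff0P => m hm; rewrite mcoeff_bicomp (negbTE hm). Qed.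

Lemma bicomp_id i j f : bihomog i j f -> bicomp i j f = f.
Proof.
move=> /bihomog_coeff0P H; apply/mpolyP => m; rewrite mcoeff_bicomp.
by case: eqP => // /eqP /H ->.
Qed.

Lemma bicomp_eq0 i j i' j' f : bihomog i j f -> (i', j') != (i, j) ->
  bicomp i' j' f = 0.
Proof.
move=> /bihomogP H hne; apply/mpolyP => m; rewrite mcoeff_bicomp mcoeff0.
case: eqP => // e; have [//|/H hm] := eqVneq f@_m 0.
by move: hne; rewrite -e hm eqxx.
Qed.

Lemma bicompMr i j a b f g : bihomog a b g ->
  bicomp i j (f * g) =
  if (a <= i)%N && (b <= j)%N then bicomp (i - a) (j - b) f * g else 0.
Proof.
move=> hg; have /bihomogP Hg := hg.
case: ifP => [/andP [ha hb]|hab].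
- rewrite -(bicomp_id (bihomogM (bihomog_bicomp (i - a) (j - b) f) hg)) !subnK //.
  apply/mpolyP => m; rewrite !mcoeff_bicomp; case: eqP => // /eqP hm.
  rewrite !mcoeffM; apply: eq_bigr => k /eqP hk; rewrite mcoeff_bicomp.
  have [g0|/Hg dg] := eqVneq g@_k.2 0; first by rewrite g0 !mulr0.
  have : bideg (k.1 + k.2)%MM == (i, j) by rewrite -hk.
  rewrite bidegD dg; case: (bideg k.1) => u v /eqP [e1 e2].
  have -> : (u, v) = (i - a, j - b)%N by congr pair; lia.
  by rewrite eqxx.
- apply/mpolyP => m; rewrite mcoeff_bicomp mcoeff0; case: eqP => // hm.
  rewrite mcoeffM big1 // => k /eqP hk.
  have [g0|/Hg dg] := eqVneq g@_k.2 0; first by rewrite g0 mulr0.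
  have : bideg (k.1 + k.2)%MM = (i, j) by rewrite -hk.
  by rewrite bidegD dg => -[e1 e2]; move: hab; rewrite -e1 -e2 !leq_addl.
Qed.

Lemma bihomog_mderiv (v : 'I_4) a b a' b' f :
  bideg U_(v) = (a' , b') -> bihomog a b f -> bihomog (a - a') (b - b') f^`M(v).
Proof.
move=> dv /bihomogP H; apply/bihomogP => m; rewrite mcoeff_mderiv => hm.
have nz : f@_(m + U_(v))%MM != 0 by apply: contraNneq hm => ->; rewrite mul0rn.
by move: (H _ nz); rewrite bidegD dv; case: (bideg m) => u w /= [<- <-]; rewrite !addnK.
Qed.

Lemma mderiv_eq0 (v : 'I_4) a b a' b' f :
  bideg U_(v) = (a' , b') -> bihomog a b f -> (a < a')%N || (b < b')%N ->
  f^`M(v) = 0.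
Proof.
move=> dv /bihomogP H hlt; apply/mpolyP => m; rewrite mcoeff_mderiv mcoeff0.
have [->|/H] := eqVneq f@_(m + U_(v))%MM 0; first by rewrite mul0rn.
by rewrite bidegD dv => -[e1 e2]; move: hlt; rewrite -e1 -e2 !ltnNge !leq_addl.
Qed.

Lemma bideg_subU (v : 'I_4) (m : 'X_{1..4}) a b :
  m v != 0%N -> bideg U_(v) = (a, b) ->
  bideg (m - U_(v))%MM = ((bideg m).1 - a, (bideg m).2 - b)%N.
Proof.
move=> mv dv; have := bidegD (m - U_(v)) U_(v).
by rewrite submK ?lep1mP // dv => ->; rewrite /= !addnK.
Qed.

Lemma mulX_subU (v : 'I_4) (m : 'X_{1..4}) :
  m v != 0%N -> ('X_v * 'X_[m - U_(v)] : S K) = 'X_[m].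
Proof. by move=> mv; rewrite -mpolyXD addmC submK // lep1mP. Qed.

Lemma bihomog_decompX a b (p : S K) : bihomog a.+1 b p ->
  exists u w, [/\ bihomog a b u, bihomog a b w & p = 'X_iX0 * u + 'X_iX1 * w].
Proof.
move=> /bihomogP Hp.
have degX (v : 'I_4) m : bideg U_(v) = (1, 0)%N -> m \in msupp p -> m v != 0%N ->
    bihomog a b (p@_m *: 'X_[m - U_(v)]).
  move=> dv mp mv; apply: bihomogZ; have := bihomogX (m - U_(v))%MM.
  by rewrite (bideg_subU mv dv) (Hp m) ?subn0 ?subn1 // -mcoeff_msupp.
exists (\sum_(m <- msupp p | m iX0 != 0%N) p@_m *: 'X_[m - U_(iX0)]).
exists (\sum_(m <- msupp p | m iX0 == 0%N) p@_m *: 'X_[m - U_(iX1)]).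
have mX1 m : m \in msupp p -> m iX0 = 0%N -> m iX1 != 0%N.
  rewrite mcoeff_msupp => /Hp; rewrite /bideg => -[+ _] e; rewrite e; lia.
split.
- rewrite big_seq_cond; apply: bihomog_sum => m /andP [mp mv].
  exact: degX (bidegU iX0) mp mv.
- rewrite big_seq_cond; apply: bihomog_sum => m /andP [mp /eqP mv].
  exact: degX (bidegU iX1) mp (mX1 _ mp mv).
- rewrite [RHS]addrC !mulr_sumr {1}[p]mpolyE (bigID (fun m : 'X_{1..4} => m iX0 == 0%N)) /=.
  congr (_ + _); rewrite big_seq_cond [in RHS]big_seq_cond;
    apply: eq_bigr => m /andP [mp mv]; rewrite -scalerAr mulX_subU //.
  exact: mX1 mp (eqP mv).
Qed.

End Bidegree.

(** * Ideals and the Kaehler different *)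

Section Ideal.
Variable K : fieldType.
Implicit Types (f g : S K) (gs : seq (S K)).

Lemma in_ideal0 gs : in_ideal gs 0.
Proof. by exists (fun _ => 0); rewrite big1 // => k _; rewrite mul0r. Qed.

Lemma in_idealD gs f g : in_ideal gs f -> in_ideal gs g -> in_ideal gs (f + g).
Proof.
move=> [c1 ->] [c2 ->]; exists (fun k => c1 k + c2 k).
by rewrite -big_split /=; apply: eq_bigr => k _; rewrite mulrDl.
Qed.

Lemma in_idealMl gs c f : in_ideal gs f -> in_ideal gs (c * f).
Proof.
move=> [c1 ->]; exists (fun k => c * c1 k).
by rewrite mulr_sumr; apply: eq_bigr => k _; rewrite mulrA.
Qed.

Lemma in_idealMr gs c f : in_ideal gs f -> in_ideal gs (f * c).
Proof. by rewrite mulrC; apply: in_idealMl. Qed.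

Lemma in_idealZ gs c f : in_ideal gs f -> in_ideal gs (c *: f).
Proof. by rewrite -mul_mpolyC; apply: in_idealMl. Qed.

Lemma in_idealB gs f g : in_ideal gs f -> in_ideal gs g -> in_ideal gs (f - g).
Proof. by move=> hf hg; rewrite -scaleN1r; apply/in_idealD/in_idealZ. Qed.

Lemma in_ideal_sum gs (I : Type) (r : seq I) (p : pred I) (G : I -> S K) :
  (forall x, p x -> in_ideal gs (G x)) -> in_ideal gs (\sum_(x <- r | p x) G x).
Proof.
by move=> H; elim/big_rec: _ => [|x y /H]; [apply: in_ideal0 | apply: in_idealD].
Qed.

Lemma in_ideal_mem gs g : g \in gs -> in_ideal gs g.
Proof.
move=> hg; have hi : (index g gs < size gs)%N by rewrite index_mem.
exists (fun k => (k == Ordinal hi)%:R).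
rewrite (bigD1 (Ordinal hi)) //= eqxx mul1r nth_index // big1 ?addr0 //.
by move=> k /negbTE ->; rewrite mul0r.
Qed.

Lemma kjac_in_kdiff F f g : in_ideal F f -> in_ideal F g -> kdiff F (kjac f g).
Proof.
move=> [c ->] [d ->].
rewrite /kdiff; set J := F ++ _.
have JF (e : 'I_(size F) -> S K) : in_ideal J (\sum_k e k * F`_k).
  by apply: in_ideal_sum => k _; apply/in_idealMl/in_ideal_mem; rewrite mem_cat mem_nth.
have Jjac (k l : 'I_(size F)) : in_ideal J (kjac F`_k F`_l).
  apply: in_ideal_mem; rewrite mem_cat; apply/orP; right.
  by apply: allpairs_f; apply: mem_nth.
have dsum (e : 'I_(size F) -> S K) v : (\sum_k e k * F`_k)^`M(v) =
    \sum_k (e k)^`M(v) * F`_k + \sum_k e k * (F`_k)^`M(v).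
  by rewrite raddf_sum -big_split /=; apply: eq_bigr => k _; rewrite mderivM.
rewrite /kjac !dsum.
set cX := \sum_k (c k)^`M(iX1) * F`_k; set cY := \sum_k (c k)^`M(iY1) * F`_k.
set dX := \sum_k (d k)^`M(iX1) * F`_k; set dY := \sum_k (d k)^`M(iY1) * F`_k.
set FcX := \sum_k c k * (F`_k)^`M(iX1); set FcY := \sum_k c k * (F`_k)^`M(iY1).
set FdX := \sum_k d k * (F`_k)^`M(iX1); set FdY := \sum_k d k * (F`_k)^`M(iY1).
(* Product rule: the terms still containing an underived [F`_k] lie in (F). *)
have -> : (cX + FcX) * (dY + FdY) - (dX + FdX) * (cY + FcY) =
   (cX * (dY + FdY) + dY * FcX - dX * (cY + FcY) - cY * FdX) +
   (FcX * FdY - FdX * FcY) by ring.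
apply: in_idealD.
  by do ![apply: in_idealB | apply: in_idealD]; apply/in_idealMr/JF.
have -> : FcX * FdY - FdX * FcY = \sum_k \sum_l (c k * d l) * kjac F`_k F`_l.
  rewrite /FcX /FdY /FdX /FcY !mulr_suml.
  under eq_bigr do rewrite mulr_sumr.
  under [X in _ - X]eq_bigr do rewrite mulr_sumr.
  rewrite [X in _ - X]exchange_big /= -sumrB; apply: eq_bigr => k _.
  by rewrite -sumrB; apply: eq_bigr => l _; rewrite /kjac; ring.
by do 2 apply: in_ideal_sum => ? _; apply/in_idealMl/Jjac.
Qed.

End Ideal.

(** * Hilbert functions as ranks of evaluation matrices *)

Lemma rowspace_of_subspace (K : fieldType) s (V : 'rV[K]_s -> Prop) :
  V 0 -> (forall a u v, V u -> V v -> V (a *: u + v)) ->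
  exists M : 'M[K]_s, forall v, (v <= M)%MS <-> V v.
Proof.
move=> V0 Vlin.
have approx d : exists M : 'M[K]_s, (forall v, (v <= M)%MS -> V v) /\
    ((forall v, V v -> (v <= M)%MS) \/ (d <= \rank M)%N).
  elim: d => [|d [M [MV spanM]]].
    by exists 0; split; [move=> v /submx0null -> | right].
  case: (classic (exists v, V v /\ ~~ (v <= M)%MS)) => [[v [Vv vM]] | Mspan]; last first.
    exists M; split => //; left => v Vv.
    by apply/negPn/negP => vM; apply: Mspan; exists v.
  have rkM : (d <= \rank M)%N by case: spanM => // /(_ v Vv); rewrite (negbTE vM).
  exists (M + v)%MS; split.
  - move=> w /sub_addsmxP [[u1 u2] /= ->].
    by rewrite [u2]mx11_scalar mul_scalar_mx addrC; apply: Vlin Vv (MV _ (submxMl _ _)).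
  - right; apply: leq_ltn_trans rkM (rank_ltmx _).
    by rewrite ltmxE addsmxSl /=; apply: contra vM => /(submx_trans (addsmxSr M v)).
have [M [MV [Mspan|]]] := approx s.+1; last by rewrite ltnNge rank_leq_col.
by exists M => v; split; [apply: MV | apply: Mspan].
Qed.

Lemma mxrank_stationary (K : fieldType) s (M0 M1 M2 D0 D1 : 'M[K]_s) :
  D0 \in unitmx -> D0 *m D1 = D1 *m D0 ->
  (M0 *m D0 <= M1)%MS -> (M0 *m D1 <= M1)%MS -> (M1 *m D0 <= M2)%MS ->
  (M2 <= M1 *m D0 + M1 *m D1)%MS ->
  \rank M0 = \rank M1 -> \rank M1 = \rank M2.
Proof.
move=> uD0 cD sM0D0 sM0D1 sM1D0 sM2 rk01.
have fD0 : row_free D0 by rewrite row_free_unit.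
have eM1 : (M1 <= M0 *m D0)%MS.
  by move: (mxrank_leqif_eq sM0D0).2; rewrite mxrankMfree // rk01 eqxx => /esym /andP [].
have sM1D1 : (M1 *m D1 <= M1 *m D0)%MS.
  apply: submx_trans (submxMr D1 eM1) _.
  by rewrite -mulmxA cD mulmxA submxMr.
have sM2' : (M2 <= M1 *m D0)%MS by apply: submx_trans sM2 _; rewrite addsmx_sub submx_refl.
by apply/eqP; rewrite eqn_leq -!(mxrankMfree M1 fD0) !mxrankS.
Qed.

Lemma row_of_coeffs (K : fieldType) n (v : 'rV[K]_n) : \row_k v 0 k = v.
Proof. by apply/rowP => k; rewrite mxE. Qed.

Section Evaluation.
Variables (K : fieldType) (s : nat) (P : 'I_s -> pt K).
Implicit Types (f g : S K).

Definition ev f : 'rV[K]_s := \row_k f.@[P k].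

Lemma ev_is_linear : linear ev.
Proof. by move=> c f g; apply/rowP => k; rewrite !mxE mevalD mevalZ. Qed.

HB.instance Definition _ := GRing.isLinear.Build K (S K) 'rV[K]_s _ ev ev_is_linear.

Lemma evMX (v : 'I_4) f : ev ('X_v * f) = ev f *m diag_mx (\row_k P k v).
Proof. by apply/rowP => l; rewrite mul_mx_diag !mxE mevalM mevalXU mulrC. Qed.

Lemma IX_bihomogE i j f : bihomog i j f -> IX P f <-> forall k, f.@[P k] = 0.
Proof.
move=> hf; split => [H k|H k i' j']; first by rewrite -(bicomp_id hf); apply: H.
have [[-> ->]|ne] := eqVneq (i', j') (i, j); first by rewrite bicomp_id.
by rewrite (bicomp_eq0 hf ne) meval0.
Qed.

Lemma IX_ev i j f : bihomog i j f -> IX P f <-> ev f = 0.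
Proof.
move=> /IX_bihomogE ->; split => [H|H k]; first by apply/rowP => k; rewrite !mxE H.
by have := congr1 (fun v : 'rV_s => v 0 k) H; rewrite !mxE.
Qed.

Definition evmx n (b : 'I_n -> S K) : 'M[K]_(n, s) := \matrix_(k, l) (b k).@[P l].

Lemma row_evmx n (b : 'I_n -> S K) k : row k (evmx b) = ev (b k).
Proof. by apply/rowP => l; rewrite !mxE. Qed.

Lemma mul_evmx n (b : 'I_n -> S K) (c : 'I_n -> K) :
  \row_k c k *m evmx b = ev (\sum_k c k *: b k).
Proof.
rewrite mulmx_sum_row linear_sum; apply: eq_bigr => k _.
by rewrite row_evmx linearZ mxE.
Qed.

Section Dimension.
Variables (A : S K -> Prop) (i j : nat).
Hypotheses (A0 : A 0) (AD : forall f g, A f -> A g -> A (f + g)).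
Hypotheses (AZ : forall c f, A f -> A (c *: f)) (Ahom : forall f, A f -> bihomog i j f).

Definition spans_ev (M : 'M[K]_s) :=
  forall v, (v <= M)%MS <-> exists f, A f /\ v = ev f.

Lemma exists_spans_ev : exists M, spans_ev M.
Proof.
apply: rowspace_of_subspace; first by exists 0; rewrite linear0.
move=> a _ _ [f [Af ->]] [g [Ag ->]].
by exists (a *: f + g); rewrite linearD linearZ; split => //; apply/AD/Ag/AZ.
Qed.

Lemma A_comb n (b : 'I_n -> S K) (c : 'I_n -> K) :
  (forall k, A (b k)) -> A (\sum_k c k *: b k).
Proof. by move=> Ab; elim/big_rec: _ => // k g _; apply/AD/AZ. Qed.

Lemma IX_comb n (b : 'I_n -> S K) (c : 'I_n -> K) : (forall k, A (b k)) ->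
  IX P (\sum_k c k *: b k) <-> \row_k c k *m evmx b = 0.
Proof. by move=> Ab; rewrite mul_evmx; apply/IX_ev/Ahom/A_comb. Qed.

Lemma IX_sub_comb n (b : 'I_n -> S K) (c : 'I_n -> K) f : (forall k, A (b k)) ->
  A f -> IX P (f - \sum_k c k *: b k) <-> ev f = \row_k c k *m evmx b.
Proof.
move=> Ab Af; rewrite mul_evmx (IX_ev (bihomogB (Ahom Af) (Ahom (A_comb c Ab)))).
by rewrite linearB /=; split => [/subr0_eq|->]; last exact: subrr.
Qed.

Variable M : 'M[K]_s.
Hypothesis spanM : spans_ev M.

Lemma dim_mod_rank n : dim_mod A (IX P) n -> n = \rank M.
Proof.
move=> [b [Ab [indep gen]]].
have free : row_free (evmx b).
  apply: inj_row_free => v vb; apply/rowP => k; rewrite mxE.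
  by apply: (indep (fun k => v 0 k)); apply/(IX_comb _ Ab); rewrite row_of_coeffs.
rewrite -(eqP free); apply/eqmx_rank/andP; split; apply/row_subP => k.
- by rewrite row_evmx; apply/spanM; exists (b k).
- have [f [Af ->]] := (spanM (row k M)).1 (row_sub k M).
  by have [c /(IX_sub_comb c Ab Af) ->] := gen f Af; apply: submxMl.
Qed.

Lemma rank_dim_mod : dim_mod A (IX P) (\rank M).
Proof.
set B := row_base M.
have exf k : exists f, A f /\ row k B = ev f.
  by apply/spanM/(submx_trans (row_sub k B)); rewrite eq_row_base.
pose b k := epsilon (inhabits 0) (fun f => A f /\ row k B = ev f).
have bP k : A (b k) /\ row k B = ev (b k) := epsilon_spec _ _ (exf k).
have Ab k : A (b k) by case: (bP k).
have Bb : evmx b = B by apply/row_matrixP => k; rewrite row_evmx (bP k).2.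
exists b; split => //; split.
- move=> c /(IX_comb _ Ab); rewrite Bb => /eqP; rewrite mulmx_free_eq0 ?row_base_free //.
  by move=> /eqP c0 k; have := congr1 (fun v : 'rV_(\rank M) => v 0 k) c0; rewrite !mxE.
- move=> f Af; have /submxP [c e] : (ev f <= B)%MS.
    by rewrite eq_row_base; apply/spanM; exists f.
  by exists (fun k => c 0 k); apply/(IX_sub_comb _ Ab Af); rewrite Bb row_of_coeffs.
Qed.

Lemma dimK_spans_ev : dimK A (IX P) = \rank M.
Proof.
by apply: dim_mod_rank; apply: (epsilon_spec (inhabits 0%N) (dim_mod A (IX P)));
  exists (\rank M); apply: rank_dim_mod.
Qed.

End Dimension.

Lemma spans_ev_mulX (v : 'I_4) (A A' : S K -> Prop) (M M' : 'M[K]_s) :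
  spans_ev A M -> spans_ev A' M' -> (forall f, A f -> A' ('X_v * f)) ->
  (M *m diag_mx (\row_k P k v) <= M')%MS.
Proof.
move=> spanM spanM' AA'; apply/row_subP => k; rewrite row_mul.
have [f [Af ->]] := (spanM (row k M)).1 (row_sub k M).
by rewrite -evMX; apply/(spanM' _).2; exists ('X_v * f); split => //; apply: AA'.
Qed.

End Evaluation.

(** * One projective coordinate of the points *)

Section Coordinate.
Variables (K : fieldType) (s : nat) (P : 'I_s -> pt K) (u0 u1 : 'I_4).
Hypothesis u01 : u0 != u1.

Definition same_coord (p q : pt K) : bool := p u0 * q u1 == p u1 * q u0.
Definition valid_coord (p : pt K) : bool := (p u0 != 0) || (p u1 != 0).

(* [card_pi1 P] and [card_pi2 P] are the cardinals of [coord_reps] for the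
   coordinate pairs (X_0, X_1) and (Y_0, Y_1). *)
Definition coord_reps : {set 'I_s} :=
  [set k : 'I_s | [forall l : 'I_s, (l < k)%N ==> ~~ same_coord (P l) (P k)]].

Hypothesis validP : forall k, valid_coord (P k).

Lemma same_coord_refl p : same_coord p p.
Proof. by rewrite /same_coord mulrC. Qed.

Lemma same_coord_sym p q : same_coord p q = same_coord q p.
Proof. by rewrite /same_coord eq_sym [p u1 * _]mulrC [p u0 * _]mulrC. Qed.

Lemma same_coord_trans p q r : valid_coord q ->
  same_coord p q -> same_coord q r -> same_coord p r.
Proof.
move=> vq /eqP e1 /eqP e2; rewrite /same_coord -subr_eq0.
have h0 : (p u0 * r u1 - p u1 * r u0) * q u0 = 0.
  transitivity (p u0 * (q u0 * r u1) - (p u1 * q u0) * r u0); first by ring.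
  by rewrite e2 -e1; ring.
have h1 : (p u0 * r u1 - p u1 * r u0) * q u1 = 0.
  transitivity ((p u0 * q u1) * r u1 - p u1 * (q u1 * r u0)); first by ring.
  by rewrite -e2 e1; ring.
by case/orP: vq => nz; apply/eqP; [move: h0 | move: h1];
  move/eqP; rewrite mulf_eq0 (negbTE nz) orbF => /eqP.
Qed.

Lemma coord_rep_exists k : exists2 l, l \in coord_reps & same_coord (P l) (P k).
Proof.
case: (@arg_minnP _ k (fun l => same_coord (P l) (P k)) val (same_coord_refl _)).
move=> l hl hmin; exists l => //; rewrite inE; apply/forallP => l'.
apply/implyP => hlt; apply/negP => hs.
by have := hmin l' (same_coord_trans (validP l) hs hl); rewrite leqNgt hlt.
Qed.

Lemma coord_rep_uniq l l' : l \in coord_reps -> l' \in coord_reps ->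
  same_coord (P l) (P l') -> l = l'.
Proof.
move=> hl hl' hs; apply/val_inj; case: (ltngtP (val l) (val l')) => // hlt.
- by move: hl'; rewrite inE => /forallP /(_ l) /implyP /(_ hlt); rewrite hs.
- by move: hl; rewrite inE => /forallP /(_ l') /implyP /(_ hlt); rewrite same_coord_sym hs.
Qed.

Lemma card_coord_reps_other k :
  #|[set l in coord_reps | ~~ same_coord (P l) (P k)]| = (#|coord_reps| - 1)%N.
Proof.
have [l0 hl0 hs0] := coord_rep_exists k.
have -> : [set l in coord_reps | ~~ same_coord (P l) (P k)] = coord_reps :\ l0.
  apply/setP => l; rewrite in_setD1 in_set andbC.
  case: (boolP (l \in coord_reps)) => hl; rewrite ?andbT ?andbF //.
  apply/idP/idP => [|/eqP ne]; first by apply: contraNneq => ->.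
  apply/negP => hs; apply/ne/(coord_rep_uniq hl hl0).
  by apply: (same_coord_trans (validP k)) hs _; rewrite same_coord_sym.
by rewrite [#|coord_reps|](cardsD1 l0) hl0 addKn.
Qed.

Definition coord_form (q : pt K) : S K := q u1 *: 'X_u0 - q u0 *: 'X_u1.

Lemma coord_form_eq0 q p : ((coord_form q).@[p] == 0) = same_coord q p.
Proof.
by rewrite mevalB !mevalZ !mevalXU subr_eq0 /same_coord eq_sym [q u1 * _]mulrC.
Qed.

Lemma mderiv_coord_form q : (coord_form q)^`M(u1) = (- q u0)%:MP.
Proof.
rewrite mderivB !mderivZ !mderivX !mnm1E (negbTE u01) eqxx scale0r.
have -> : (U_(u1) - U_(u1))%MM = 0%MM by apply/mnmP => i; rewrite mnmBE subnn mnm0E.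
by rewrite scaler0 mpolyX0 scale1r sub0r -scaleNr -mul_mpolyC mulr1.
Qed.

Definition coord_sep k : S K :=
  \prod_(l in coord_reps | ~~ same_coord (P l) (P k)) coord_form (P l).

Definition coord_vanish : S K := \prod_(l in coord_reps) coord_form (P l).

Lemma coord_sep_neq0 k k' : same_coord (P k) (P k') -> (coord_sep k).@[P k'] != 0.
Proof.
move=> hs; rewrite /coord_sep rmorph_prod; apply/prodf_neq0 => l /andP [_].
rewrite coord_form_eq0; apply: contra => h.
by apply: (same_coord_trans (validP k')) h _; rewrite same_coord_sym.
Qed.

Lemma coord_sep_eq0 k k' : ~~ same_coord (P k) (P k') -> (coord_sep k).@[P k'] = 0.
Proof.
move=> hs; have [l hl hl'] := coord_rep_exists k'.
rewrite /coord_sep rmorph_prod (bigD1 l) /=; last first.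
  rewrite hl; apply: contra hs => h.
  by apply: (same_coord_trans (validP l)) hl'; rewrite same_coord_sym.
by move: hl'; rewrite -coord_form_eq0 => /eqP ->; rewrite mul0r.
Qed.

Lemma mulX_coord_sep_eq0 k k' : P k u0 = 0 -> ('X_u0 * coord_sep k).@[P k'] = 0.
Proof.
move=> a0; rewrite mevalM mevalXU.
have [hs|hs] := boolP (same_coord (P k) (P k')); last by rewrite coord_sep_eq0 ?mulr0.
have a1 : P k u1 != 0 by have := validP k; rewrite /valid_coord a0 eqxx.
move: hs; rewrite /same_coord a0 mul0r eq_sym mulf_eq0 (negbTE a1) /=.
by move/eqP ->; rewrite mul0r.
Qed.

Lemma coord_vanish_eq0 k : coord_vanish.@[P k] = 0.
Proof.
have [l hl] := coord_rep_exists k; move=> /[dup]; rewrite -coord_form_eq0 => /eqP hl' _.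
by rewrite /coord_vanish rmorph_prod (bigD1 l) //= hl' mul0r.
Qed.

Lemma mderiv_coord_vanish k : exists2 l, same_coord (P l) (P k) &
  (coord_vanish^`M(u1)).@[P k] = - P l u0 * (coord_sep k).@[P k].
Proof.
have [l hl hl'] := coord_rep_exists k; exists l => //.
rewrite /coord_vanish (bigD1 l) //= mderivM mevalD !mevalM mderiv_coord_form mevalC.
move: (hl'); rewrite -coord_form_eq0 => /eqP ->; rewrite mul0r addr0.
congr (_ * meval _ _); apply: eq_bigl => l'; case: (boolP (l' \in coord_reps)) => //= hl2.
congr (~~ _); apply/eqP/idP => [-> // | hs]; apply: coord_rep_uniq hl2 hl _.
by apply: (same_coord_trans (validP k)) hs _; rewrite same_coord_sym.
Qed.

Section Degree.
Variables a b : nat.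
Hypotheses (deg_u0 : bideg U_(u0) = (a, b)) (deg_u1 : bideg U_(u1) = (a, b)).

Lemma bihomog_coord_form q : bihomog a b (coord_form q).
Proof.
by apply: bihomogB; apply: bihomogZ; [move: (bihomogX K U_(u0)) | move: (bihomogX K U_(u1))];
  rewrite ?deg_u0 ?deg_u1.
Qed.

Lemma bihomog_coord_vanish :
  bihomog (#|coord_reps| * a) (#|coord_reps| * b) coord_vanish.
Proof. exact: bihomog_prod (fun l => bihomog_coord_form (P l)). Qed.

Lemma bihomog_coord_sep k :
  bihomog ((#|coord_reps| - 1) * a) ((#|coord_reps| - 1) * b) (coord_sep k).
Proof.
rewrite -(card_coord_reps_other k) /coord_sep.
rewrite (eq_bigl (fun l => l \in [set l in coord_reps | ~~ same_coord (P l) (P k)])) => [|l].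
  exact: bihomog_prod (fun l => bihomog_coord_form (P l)).
by rewrite [in RHS]in_set.
Qed.

End Degree.

Definition binmon beta k : 'X_{1..4} := (U_(u0) *+ (beta - k) + U_(u1) *+ k)%MM.

Lemma binmon_u1 beta k : binmon beta k u1 = k.
Proof. by rewrite mnmDE !mulmnE !mnm1E (negbTE u01) eqxx mul0n mul1n. Qed.

Lemma meval_binmon beta k (q : pt K) :
  ('X_[binmon beta k] : S K).@[q] = q u0 ^+ (beta - k) * q u1 ^+ k.
Proof. by rewrite mpolyXD -!mpolyXn mevalM !rmorphXn /= !mevalXU. Qed.

Section BinaryForm.
Variables (beta : nat) (f : S K).
Hypothesis binaryf :
  forall m, f@_m != 0 -> (m u1 <= beta)%N /\ m = binmon beta (m u1).

Lemma binary_formE : f = \sum_(k < beta.+1) f@_(binmon beta k) *: 'X_[binmon beta k].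
Proof.
apply/mpolyP => m; rewrite raddf_sum /=.
under eq_bigr do rewrite mcoeffZ mcoeffX.
have [f0|/binaryf [hle hm]] := eqVneq f@_m 0.
  by rewrite f0 big1 // => k _; case: (binmon beta k =P m) => [->|_]; rewrite ?f0 ?mul0r ?mulr0.
have hlt : (m u1 < beta.+1)%N by [].
rewrite (bigD1 (Ordinal hlt)) //= -hm eqxx mulr1 big1 ?addr0 // => k hk.
case: (binmon beta k =P m) => [e|_]; last by rewrite mulr0.
by move: hk; rewrite -val_eqE /= -e binmon_u1 eqxx.
Qed.

Lemma card_coord_reps_le : f != 0 -> (forall k, P k u0 != 0) ->
  (forall k, f.@[P k] = 0) -> (#|coord_reps| <= beta)%N.
Proof.
move=> fnz u0P fP.
pose g : {poly K} := \poly_(k < beta.+1) f@_(binmon beta k).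
have gnz : g != 0.
  apply: contra fnz => /eqP g0; rewrite binary_formE; apply/eqP/big1 => k _.
  have := coef_poly beta.+1 (fun k => f@_(binmon beta k)) k.
  by rewrite -/g g0 coef0 ltn_ord => <-; rewrite scale0r.
have fg q : q u0 != 0 -> f.@[q] = q u0 ^+ beta * g.[q u1 / q u0].
  move=> q0; rewrite {1}binary_formE raddf_sum horner_poly mulr_sumr /=.
  apply: eq_bigr => k _; rewrite mevalZ meval_binmon.
  have -> : q u0 ^+ beta = q u0 ^+ (beta - k) * q u0 ^+ k.
    by rewrite -exprD subnK // -ltnS.
  by rewrite exprMn exprVn; field; rewrite expf_neq0.
pose rs := [seq P l u1 / P l u0 | l <- enum coord_reps].
have roots : all (root g) rs.
  apply/allP => z /mapP [l _ ->]; rewrite /root.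
  by have := fP l; rewrite fg // => /eqP; rewrite mulf_eq0 expf_eq0 (negbTE (u0P l)) andbF.
have uniq_rs : uniq rs.
  rewrite map_inj_in_uniq ?enum_uniq // => l l'; rewrite !mem_enum => hl hl' e.
  apply: (coord_rep_uniq hl hl'); apply/eqP.
  by move/eqP: e; rewrite eqr_div ?u0P // => /eqP ->; rewrite mulrC.
have := max_poly_roots gnz roots uniq_rs; rewrite size_map -cardE => /leq_trans.
by rewrite -ltnS; apply; apply: size_poly.
Qed.

End BinaryForm.

End Coordinate.

(** * The point set *)

Lemma ord4_cases (v : 'I_4) : [\/ v = iX0, v = iX1, v = iY0 | v = iY1].
Proof.
case: v => [[|[|[|[|n]]]] hn] //;
  [constructor 1|constructor 2|constructor 3|constructor 4]; exact: val_inj.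
Qed.

Section PointSet.
Variables (K : fieldType) (s : nat) (P : 'I_s -> pt K).
Hypotheses (hP : distinct_pts P) (hreg : x0y0_regular P).

Local Notation r := #|coord_reps P iX0 iX1|.
Local Notation t := #|coord_reps P iY0 iY1|.
Local Notation sepX := (coord_sep P iX0 iX1).
Local Notation sepY := (coord_sep P iY0 iY1).
Local Notation vanishX := (coord_vanish P iX0 iX1).
Local Notation vanishY := (coord_vanish P iY0 iY1).

Lemma validX k : valid_coord iX0 iX1 (P k). Proof. exact: (hP.1 k).1. Qed.
Lemma validY k : valid_coord iY0 iY1 (P k). Proof. exact: (hP.1 k).2. Qed.

Lemma bihomog_sepX k : bihomog (r - 1) 0 (sepX k).
Proof. by have := bihomog_coord_sep validX (bidegU iX0) (bidegU iX1) k; rewrite muln1 muln0. Qed.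

Lemma bihomog_sepY k : bihomog 0 (t - 1) (sepY k).
Proof. by have := bihomog_coord_sep validY (bidegU iY0) (bidegU iY1) k; rewrite muln1 muln0. Qed.

Lemma bihomog_vanishX : bihomog r 0 vanishX.
Proof. by have := bihomog_coord_vanish P (bidegU iX0) (bidegU iX1); rewrite muln1 muln0. Qed.

Lemma bihomog_vanishY : bihomog 0 t vanishY.
Proof. by have := bihomog_coord_vanish P (bidegU iY0) (bidegU iY1); rewrite muln1 muln0. Qed.

Lemma IX_vanishX : IX P vanishX.
Proof. by apply/(IX_bihomogE P bihomog_vanishX) => k; apply: coord_vanish_eq0 validX k. Qed.

Lemma IX_vanishY : IX P vanishY.
Proof. by apply/(IX_bihomogE P bihomog_vanishY) => k; apply: coord_vanish_eq0 validY k. Qed.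

Lemma sepX_neq0 k : (sepX k).@[P k] != 0.
Proof. exact/(coord_sep_neq0 validX)/same_coord_refl. Qed.

Lemma sepY_neq0 k : (sepY k).@[P k] != 0.
Proof. exact/(coord_sep_neq0 validY)/same_coord_refl. Qed.

(* If a_0 = 0 at P k then a_0 = 0 on the whole fibre of P k, so x_0 times the
   separator of P k vanishes on X, and by regularity of x_0 so would the
   separator. *)
Lemma x0_neq0 k : P k iX0 != 0.
Proof.
apply/negP => /eqP a0.
have hb := bihomogM (bihomog_X0 K) (bihomog_sepX k).
suff /hreg.1 : IX P ('X_iX0 * sepX k).
  by move/(IX_bihomogE P (bihomog_sepX k))/(_ k)/eqP; rewrite (negbTE (sepX_neq0 k)).
by apply/(IX_bihomogE P hb) => k'; exact: (mulX_coord_sep_eq0 validX k' a0).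
Qed.

(* As for [x0_neq0], but y_0 is only regular modulo x_0: write the separator
   as g + x_0 h with g in I_X and compare components of bidegree (0, t - 1). *)
Lemma y0_neq0 k : P k iY0 != 0.
Proof.
apply/negP => /eqP b0.
have hb := bihomogM (bihomog_Y0 K) (bihomog_sepY k).
have IXy : IX P ('X_iY0 * sepY k).
  by apply/(IX_bihomogE P hb) => k'; exact: (mulX_coord_sep_eq0 validY k' b0).
have [g [h [IXg e]]] : exists g h, IX P g /\ sepY k = g + 'X_iX0 * h.
  by apply: hreg.2.1; exists ('X_iY0 * sepY k), 0; rewrite mulr0 addr0.
have : (bicomp 0 (t - 1) (sepY k)).@[P k] = 0.
  rewrite e linearD /= [_ * h]mulrC (bicompMr _ _ _ (bihomog_X0 K)) /= addr0.
  exact: IXg.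
by rewrite bicomp_id ?bihomog_sepY //; apply/eqP/sepY_neq0.
Qed.

Definition jac_vanish : S K := vanishX^`M(iX1) * vanishY^`M(iY1).

Lemma bihomog_jac_vanish : bihomog (r - 1) (t - 1) jac_vanish.
Proof.
have := bihomogM (bihomog_mderiv (bidegU iX1) bihomog_vanishX)
                 (bihomog_mderiv (bidegU iY1) bihomog_vanishY).
by rewrite !subn0 addn0 add0n.
Qed.

Lemma jac_vanish_neq0 k : jac_vanish.@[P k] != 0.
Proof.
rewrite mevalM.
have [l1 _ ->] := mderiv_coord_vanish (isT : iX0 != iX1) validX k.
have [l2 _ ->] := mderiv_coord_vanish (isT : iY0 != iY1) validY k.
by rewrite !mulf_neq0 ?oppr_eq0 ?x0_neq0 ?y0_neq0 ?sepX_neq0 ?sepY_neq0.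
Qed.

Lemma jac_vanish_nzd g : IX P (jac_vanish * g) -> IX P g.
Proof.
move=> H k i j; have := H k (i + (r - 1))%N (j + (t - 1))%N.
rewrite mulrC (bicompMr _ _ _ bihomog_jac_vanish) !leq_addl /= !addnK mevalM.
by move/eqP; rewrite mulf_eq0 (negbTE (jac_vanish_neq0 k)) orbF => /eqP.
Qed.

Lemma binmonX a m : bideg m = (a, 0)%N -> m = binmon iX0 iX1 a (m iX1).
Proof.
rewrite /bideg => -[e1 e2]; apply/mnmP => v.
by case: (ord4_cases v) => ->; rewrite mnmDE !mulmnE !mnm1E /=; lia.
Qed.

Lemma binmonY b m : bideg m = (0, b)%N -> m = binmon iY0 iY1 b (m iY1).
Proof.
rewrite /bideg => -[e1 e2]; apply/mnmP => v.
by case: (ord4_cases v) => ->; rewrite mnmDE !mulmnE !mnm1E /=; lia.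
Qed.

Lemma IX_bihomogX_ge a f : bihomog a 0 f -> IX P f -> f != 0 -> (r <= a)%N.
Proof.
move=> hf IXf fnz; apply: (card_coord_reps_le _ (f := f)) fnz x0_neq0 _ => //.
- move=> m /(bihomogP _ _ _ hf) dm; split; last exact: binmonX.
  by move: dm; rewrite /bideg => -[<- _]; apply: leq_addl.
- exact/(IX_bihomogE P hf).
Qed.

Lemma IX_bihomogY_ge b f : bihomog 0 b f -> IX P f -> f != 0 -> (t <= b)%N.
Proof.
move=> hf IXf fnz; apply: (card_coord_reps_le _ (f := f)) fnz y0_neq0 _ => //.
- move=> m /(bihomogP _ _ _ hf) dm; split; last exact: binmonY.
  by move: dm; rewrite /bideg => -[_ <-]; apply: leq_addl.
- exact/(IX_bihomogE P hf).
Qed.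

End PointSet.

(** * The Hilbert function of the Kaehler different *)

Section KaehlerDifferent.
Variables (K : fieldType) (s : nat) (P : 'I_s -> pt K).
Hypotheses (hP : distinct_pts P) (hreg : x0y0_regular P).
Variable F : seq (S K).
Hypothesis hF : bihom_gens_IX P F.

Local Notation r := #|coord_reps P iX0 iX1|.
Local Notation t := #|coord_reps P iY0 iY1|.

Definition kdiff_part i j f := kdiff F f /\ bihomog i j f.

Lemma HF_kdiff_spans i j :
  exists2 M, spans_ev P (kdiff_part i j) M & HF_kdiff P F i j = \rank M.
Proof.
have A0 : kdiff_part i j 0 by split; [apply: in_ideal0 | apply: bihomog0].
have AD f g : kdiff_part i j f -> kdiff_part i j g -> kdiff_part i j (f + g).
  by move=> [kf hf] [kg hg]; split; [apply: in_idealD | apply: bihomogD].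
have AZ c f : kdiff_part i j f -> kdiff_part i j (c *: f).
  by move=> [kf hf]; split; [apply: in_idealZ | apply: bihomogZ].
have [M spanM] := exists_spans_ev P A0 AD AZ.
exists M => //.
exact: (dimK_spans_ev A0 AD AZ (fun f (hf : kdiff_part i j f) => hf.2) spanM).
Qed.

Lemma gen_bihomog_IX x : x \in F -> exists a b, bihomog a b x /\ IX P x.
Proof.
move=> xF; have xi : (index x F < size F)%N by rewrite index_mem.
have [a [b hx]] := hF.1 (Ordinal xi); have IXx := hF.2.1 (Ordinal xi).
by exists a, b; rewrite /= nth_index in hx IXx.
Qed.

Lemma ev_bicomp_gen i j c x : x \in F -> ev P (bicomp i j (c * x)) = 0.
Proof.
move=> /gen_bihomog_IX [a [b [hx IXx]]]; rewrite (bicompMr _ _ _ hx).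
case: ifP => _; last exact: linear0.
by apply/rowP => k; rewrite !mxE mevalM ((IX_bihomogE P hx).1 IXx k) mulr0.
Qed.

Lemma kdiff_jac_vanish : kdiff F (jac_vanish P).
Proof.
have -> : jac_vanish P = kjac (coord_vanish P iX0 iX1) (coord_vanish P iY0 iY1).
  rewrite /kjac (mderiv_eq0 (bidegU iX1) (bihomog_vanishY P)) //.
  by rewrite mul0r subr0.
by apply: kjac_in_kdiff; apply/hF.2.2; [apply: IX_vanishX | apply: IX_vanishY].
Qed.

Lemma HF_kdiff_full i j : (2 * r - 2 <= i)%N -> (2 * t - 2 <= j)%N ->
  HF_kdiff P F i j = s.
Proof.
move=> hi hj; have [M spanM ->] := HF_kdiff_spans i j.
apply/eqP; rewrite eqn_leq rank_leq_col -{1}(mxrank1 K s) mxrankS //.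
apply/row_subP => k; rewrite row1.
pose g := jac_vanish P * coord_sep P iX0 iX1 k * coord_sep P iY0 iY1 k *
  'X_iX0 ^+ (i - (2 * r - 2)) * 'X_iY0 ^+ (j - (2 * t - 2)).
have gk : g.@[P k] != 0.
  rewrite 4!mevalM !rmorphXn /= !mevalXU.
  rewrite !mulf_neq0 ?expf_neq0 ?(jac_vanish_neq0 hP hreg) ?(sepX_neq0 hP)
    ?(sepY_neq0 hP) ?(x0_neq0 hP hreg) ?(y0_neq0 hP hreg) //.
apply/(spanM _).2; exists ((g.@[P k])^-1 *: g); split; first split.
- by rewrite /g; apply/in_idealZ/in_idealMr/in_idealMr/in_idealMr/in_idealMr/kdiff_jac_vanish.
- apply: bihomogZ.
  have := bihomogM (bihomogM (bihomogM (bihomogM (bihomog_jac_vanish P)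
     (bihomog_sepX hP k)) (bihomog_sepY hP k))
     (bihomogXn (i - (2 * r - 2)) (bihomog_X0 K)))
     (bihomogXn (j - (2 * t - 2)) (bihomog_Y0 K)).
  by congr bihomog; lia.
- apply/rowP => l; rewrite linearZ !mxE /=.
  have [->|nlk] := eqVneq l k; first by rewrite mulVf.
  suff -> : g.@[P l] = 0 by rewrite mulr0.
  rewrite 4!mevalM; move: (hP.2 k l); rewrite eq_sym negb_and => /(_ nlk) /orP [h|h].
  + by rewrite (coord_sep_eq0 (validX hP) h) !(mulr0, mul0r).
  + by rewrite (coord_sep_eq0 (validY hP) h) !(mulr0, mul0r).
Qed.

Lemma HF_kdiff_eq0 i j :
  (forall c x y, x \in F -> y \in F -> bicomp i j (c * kjac x y) = 0) ->
  HF_kdiff P F i j = 0%N.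
Proof.
move=> Hjac; have [M spanM ->] := HF_kdiff_spans i j.
apply/eqP; rewrite -leqn0 -(mxrank0 K s s) mxrankS //; apply/row_subP => k.
have [f [[[c ->] hf] ->]] := (spanM (row k M)).1 (row_sub k M).
rewrite -(bicomp_id hf) (raddf_sum (bicomp i j)) raddf_sum summx_sub // => l _.
set L := F ++ _ in l *; have : L`_l \in L by apply: mem_nth.
rewrite /= mem_cat => /orP [/(ev_bicomp_gen i j (c l)) ->|]; first exact: sub0mx.
by case/allpairsP => -[x y] [/= xF yF ->]; rewrite Hjac // linear0 sub0mx.
Qed.

Lemma bicomp_jac_x0 j c x y : x \in F -> y \in F -> (j < t - 1)%N ->
  bicomp 0 j (c * (x^`M(iX1) * y^`M(iY1))) = 0.
Proof.
move=> /gen_bihomog_IX [a1 [b1 [hx _]]] /gen_bihomog_IX [a2 [b2 [hy IXy]]] hj.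
rewrite (bicompMr _ _ _ (bihomogM (bihomog_mderiv (bidegU iX1) hx)
                                  (bihomog_mderiv (bidegU iY1) hy))).
case: ifP => // /andP [ha hb].
have a20 : a2 = 0%N by lia.
rewrite a20 in hy; have [->|ynz] := eqVneq y 0; first by rewrite mderiv0 !mulr0.
by have := IX_bihomogY_ge hP hreg hy IXy ynz; lia.
Qed.

Lemma bicomp_jac_y0 i c x y : x \in F -> y \in F -> (i < r - 1)%N ->
  bicomp i 0 (c * (x^`M(iX1) * y^`M(iY1))) = 0.
Proof.
move=> /gen_bihomog_IX [a1 [b1 [hx IXx]]] /gen_bihomog_IX [a2 [b2 [hy _]]] hi.
rewrite (bicompMr _ _ _ (bihomogM (bihomog_mderiv (bidegU iX1) hx)
                                  (bihomog_mderiv (bidegU iY1) hy))).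
case: ifP => // /andP [ha hb].
have b10 : b1 = 0%N by lia.
rewrite b10 in hx; have [->|xnz] := eqVneq x 0; first by rewrite mderiv0 !mul0r mulr0.
by have := IX_bihomogX_ge hP hreg hx IXx xnz; lia.
Qed.

Lemma HF_kdiff_x0 j : (j < t - 1)%N -> HF_kdiff P F 0 j = 0%N.
Proof.
move=> hj; apply: HF_kdiff_eq0 => c x y xF yF.
by rewrite /kjac mulrBr linearB /= !bicomp_jac_x0 ?subrr.
Qed.

Lemma HF_kdiff_y0 i : (i < r - 1)%N -> HF_kdiff P F i 0 = 0%N.
Proof.
move=> hi; apply: HF_kdiff_eq0 => c x y xF yF.
by rewrite /kjac mulrBr linearB /= !bicomp_jac_y0 ?subrr.
Qed.

Lemma kdiff_part_mulX (v : 'I_4) i j f : bideg U_(v) = (1, 0)%N ->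
  kdiff_part i j f -> kdiff_part i.+1 j ('X_v * f).
Proof.
move=> dv [kf hf]; split; first exact: in_idealMl.
by have := bihomogM (bihomogX K U_(v)) hf; rewrite dv.
Qed.

Section Stationary.
Variables (j u : nat) (h : 'I_u -> S K) (di dj : 'I_u -> nat).
Hypothesis hh : forall k, bihomog (di k) (dj k) (h k).
Hypothesis hgen : forall f, kdiff F f <-> in_ideal (F ++ [seq h k | k <- enum 'I_u]) f.

Local Notation D v := (diag_mx (\row_k P k v)).

Lemma kdiff_part_succ_sub i (M M' : 'M[K]_s) :
  (\max_(k < u | (dj k <= j)%N) di k <= i)%N ->
  spans_ev P (kdiff_part i j) M -> spans_ev P (kdiff_part i.+1 j) M' ->
  (M' <= M *m D iX0 + M *m D iX1)%MS.
Proof.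
move=> hi spanM spanM'; apply/row_subP => k.
have [f [[/hgen [c ->] hf] ->]] := (spanM' (row k M')).1 (row_sub k M').
rewrite -(bicomp_id hf) (raddf_sum (bicomp i.+1 j)) raddf_sum summx_sub // => l _ /=.
set L := F ++ _ in l *; have : L`_l \in L by apply: mem_nth.
rewrite mem_cat => /orP [/(ev_bicomp_gen i.+1 j (c l)) ->|]; first exact: sub0mx.
case/mapP => l' _ ->; rewrite (bicompMr _ _ _ (hh l')).
case: ifP => [/andP [hdi hdj]|_]; last by rewrite linear0 sub0mx.
have hdi' : (di l' <= i)%N by apply: leq_trans hi; apply: leq_bigmax_cond.
rewrite subSn //.
have [w0 [w1 [h0 h1 ->]]] := bihomog_decompX (bihomog_bicomp (i - di l').+1 (j - dj l') (c l)).
rewrite mulrDl -!mulrA linearD /= !evMX; apply: addmx_sub_adds; apply: submxMr.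
- apply/(spanM _).2; exists (w0 * h l'); split => //; split.
    by apply/in_idealMl/hgen/in_ideal_mem; rewrite mem_cat map_f ?mem_enum ?orbT.
  by have := bihomogM h0 (hh l'); rewrite !subnK.
- apply/(spanM _).2; exists (w1 * h l'); split => //; split.
    by apply/in_idealMl/hgen/in_ideal_mem; rewrite mem_cat map_f ?mem_enum ?orbT.
  by have := bihomogM h1 (hh l'); rewrite !subnK.
Qed.

Lemma HF_kdiff_stationary i :
  (\max_(k < u | (dj k <= j)%N) di k <= i)%N ->
  HF_kdiff P F i j = HF_kdiff P F i.+1 j -> HF_kdiff P F i.+1 j = HF_kdiff P F i.+2 j.
Proof.
move=> hi.
have [M0 span0 ->] := HF_kdiff_spans i j.
have [M1 span1 ->] := HF_kdiff_spans i.+1 j.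
have [M2 span2 ->] := HF_kdiff_spans i.+2 j.
have D0unit : D iX0 \in unitmx.
  rewrite unitmxE det_diag unitfE; apply/prodf_neq0 => k _.
  by rewrite mxE (x0_neq0 hP hreg).
have Dcomm : D iX0 *m D iX1 = D iX1 *m D iX0.
  by rewrite !mulmx_diag; congr diag_mx; apply/rowP => k; rewrite !mxE mulrC.
apply: (mxrank_stationary D0unit Dcomm).
- exact: spans_ev_mulX span0 span1 (fun f => kdiff_part_mulX (bidegU iX0)).
- exact: spans_ev_mulX span0 span1 (fun f => kdiff_part_mulX (bidegU iX1)).
- exact: spans_ev_mulX span1 span2 (fun f => kdiff_part_mulX (bidegU iX0)).
- exact: kdiff_part_succ_sub (leq_trans hi (leqnSn i)) span1 span2.
Qed.

End Stationary.

End KaehlerDifferent.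

Theorem proposition6p3 (K : fieldType) (charK0 : [pchar K] =i pred0)
    (s : nat) (P : 'I_s -> pt K) (hP : distinct_pts P)
    (hreg : x0y0_regular P)
    (F : seq (S K)) (hF : bihom_gens_IX P F) :
  let r := card_pi1 P in
  let t := card_pi2 P in
  let HF := HF_kdiff P F in
  (* (a) *)
  ((2 <= r)%N -> forall j, (j < t - 1)%N -> HF 0%N j = 0%N) /\
  (* (b) *)
  ((2 <= t)%N -> forall i, (i < r - 1)%N -> HF i 0%N = 0%N) /\
  (* (c) *)
  (exists f, kdiff F f /\ forall g, IX P (f * g) -> IX P g) /\
  (* (d) *)
  (forall (j u : nat) (h : 'I_u -> S K) (di dj : 'I_u -> nat),
     (forall k, bihomog (di k) (dj k) (h k)) ->
     (forall k, kdiff F (h k)) ->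
     (forall f, kdiff F f <-> in_ideal (F ++ [seq h k | k <- enum 'I_u]) f) ->
     (forall k, ~ in_ideal (F ++ [seq h l | l <- enum 'I_u & l != k]) (h k)) ->
     let i0 := (\max_(k < u | (dj k <= j)%N) di k)%N in
     forall i, (i0 <= i)%N -> HF i j = HF i.+1 j -> HF i.+1 j = HF i.+2 j) /\
  (* (e) *)
  (forall i j, (2 * r - 2 <= i)%N -> (2 * t - 2 <= j)%N -> HF i j = s).
Proof.
move=> r t HF; split; [|split; [|split; [|split]]].
- by move=> _ j; apply: (HF_kdiff_x0 hP hreg hF).
- by move=> _ i; apply: (HF_kdiff_y0 hP hreg hF).
- exists (jac_vanish P); split; first exact: (kdiff_jac_vanish hP hF).
  exact: (jac_vanish_nzd hP hreg).
- move=> j u h di dj hh _ hgen _ i0 i.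
  exact: (HF_kdiff_stationary hP hreg hF hh hgen).
- exact: (HF_kdiff_full hP hreg hF).
Qed.
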